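(* Let $f:\mathcal{S}\to\mathbb{R}$ be continuously differentiable with $f^\star:=\inf_{X\in\mathcal{S}}f(X)>-\infty$, suppose $f$ is layer-wise $(L^0,L^1)$-smooth with constants $L^0,L^1\in\mathbb{R}^p_+$, and suppose $f$ satisfies the layer-wise Polyak–Łojasiewicz condition with constant $\mu>0$: $\sum_{i=1}^p\|\nabla_i f(X)\|^2_{(i)\star}\ge 2\mu(f(X)-f^\star)$ for all $X\in\mathcal{S}$. Fix $\varepsilon>0$ and let $X^0,X^1,\dots$ be the iterates of deterministic Gluon with radii $t_i^k=\frac{\|\nabla_i f(X^k)\|_{(i)\star}}{L^0_i+L^1_i\|\nabla_i f(X^k)\|_{(i)\star}}$ (assumed well defined, with $t_i^k:=0$ when $\nabla_i f(X^k)=0$). Let $\Delta^0:=f(X^0)-f^\star$, $L^0_{\max}:=\max_iL^0_i$, $L^1_{\max}:=\max_iL^1_i$. (1) With $K:=\left\lceil\frac{\Delta^0\sum_{i=1}^pL^0_i}{\mu\varepsilon}+\frac{\sqrt2L^1_{\max}\Delta^0}{\sqrt{\mu\varepsilon}}\right\rceil$ (provided $K\ge1$), $\min_{k=0,\dots,K-1}f(X^k)-f^\star\le\varepsilon$. (2) If $L^1_i=0$ for all $i=1,\dots,p$, then with $K:=\left\lceil\frac{L^0_{\max}}{\mu}\log\frac{\Delta^0}{\varepsilon}\right\rceil$, $f(X^K)-f^\star\le\varepsilon$.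
   Context: $\mathcal{S}=\mathcal{S}_1\times\cdots\times\mathcal{S}_p$ with $\mathcal{S}_i=\mathbb{R}^{m_i\times n_i}$; an element is written $X=[X_1,\dots,X_p]$. Each $\mathcal{S}_i$ carries the trace inner product $\langle X_i,Y_i\rangle_{(i)}=\operatorname{tr}(X_i^\top Y_i)$ and an arbitrary norm $\|\cdot\|_{(i)}$ with dual norm $\|Y_i\|_{(i)\star}=\sup_{\|Z_i\|_{(i)}\le 1}\langle Y_i,Z_i\rangle_{(i)}$. $\nabla_i f(X)$ is the gradient block corresponding to $X_i$. Layer-wise $(L^0,L^1)$-smoothness: for all $i$ and $X,Y\in\mathcal{S}$, $\|\nabla_i f(X)-\nabla_i f(Y)\|_{(i)\star}\le (L^0_i+L^1_i\|\nabla_i f(X)\|_{(i)\star})\|X_i-Y_i\|_{(i)}$. Deterministic Gluon: for each $k$ and $i$, $X_i^{k+1}\in\arg\min\{\langle \nabla_i f(X^k),X_i\rangle_{(i)}: \|X_i-X_i^k\|_{(i)}\le t_i^k\}$ (any minimizer), $X^{k+1}=[X_1^{k+1},\dots,X_p^{k+1}]$. $\log$ is the natural logarithm. *)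

From HB Require Import structures.
From mathcomp Require Import all_boot all_order all_algebra.
From mathcomp Require Import all_classical all_reals.
From mathcomp Require Import exp.
Set Implicit Arguments. Unset Strict Implicit. Unset Printing Implicit Defensive.
Import Order.TTheory GRing.Theory Num.Theory.
Local Open Scope ring_scope.
Local Open Scope classical_set_scope.

Definition prodS (R : realType) (p : nat) (m n : 'I_p -> nat) : Type :=
  forall i : 'I_p, 'M[R]_(m i, n i).

Definition ipb (R : realType) (a b : nat) (A B : 'M[R]_(a, b)) : R :=
  \tr (A^T *m B).

Definition subS (R : realType) p (m n : 'I_p -> nat) (X Y : prodS R m n)
  : prodS R m n := fun i => X i - Y i.

Definition ipS (R : realType) p (m n : 'I_p -> nat) (X Y : prodS R m n) : R :=
  \sum_(i < p) ipb (X i) (Y i).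

(* A reference norm on S (entrywise l1), only used to define
   Frechet differentiability / continuity; all norms on the finite
   dimensional space S are equivalent. *)
Definition refnS (R : realType) p (m n : 'I_p -> nat) (X : prodS R m n) : R :=
  \sum_(i < p) \sum_(a < m i) \sum_(b < n i) `|X i a b|.

Definition is_norm (R : realType) (a b : nat) (N : 'M[R]_(a, b) -> R) : Prop :=
  [/\ (forall A, 0 <= N A),
      (forall A, N A = 0 -> A = 0),
      (forall (c : R) A, N (c *: A) = `|c| * N A) &
      (forall A B, N (A + B) <= N A + N B)].

Definition dualn (R : realType) (a b : nat) (N : 'M[R]_(a, b) -> R)
  (Y : 'M[R]_(a, b)) : R :=
  sup [set ipb Y Z | Z in [set Z | N Z <= 1]].

(* f : S -> R is continuously differentiable and g is its gradient
   (w.r.t. the trace inner product): f is Frechet differentiable at every X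
   with derivative H |-> <g X, H>, and g is continuous. *)
Definition C1_with_gradient (R : realType) p (m n : 'I_p -> nat)
  (f : prodS R m n -> R) (g : prodS R m n -> prodS R m n) : Prop :=
  (forall X (e : R), 0 < e -> exists2 d : R, 0 < d &
     forall Y, refnS (subS Y X) < d ->
       `|f Y - f X - ipS (g X) (subS Y X)| <= e * refnS (subS Y X))
  /\
  (forall X (e : R), 0 < e -> exists2 d : R, 0 < d &
     forall Y, refnS (subS Y X) < d -> refnS (subS (g Y) (g X)) < e).

Definition fstar (R : realType) p (m n : 'I_p -> nat)
  (f : prodS R m n -> R) : R := inf (range f).

Definition gluon_radius (R : realType) p (m n : 'I_p -> nat)
  (N : forall i : 'I_p, 'M[R]_(m i, n i) -> R) (L0 L1 : 'I_p -> R)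
  (G : prodS R m n) (i : 'I_p) : R :=
  if G i == 0 then 0
  else dualn (N i) (G i) / (L0 i + L1 i * dualn (N i) (G i)).

Definition gluon_run (R : realType) p (m n : 'I_p -> nat)
  (N : forall i : 'I_p, 'M[R]_(m i, n i) -> R)
  (g : prodS R m n -> prodS R m n) (t : nat -> 'I_p -> R)
  (Xs : nat -> prodS R m n) : Prop :=
  forall (k : nat) (i : 'I_p),
    N i (Xs k.+1 i - Xs k i) <= t k i /\
    (forall Z : 'M[R]_(m i, n i), N i (Z - Xs k i) <= t k i ->
       ipb (g (Xs k) i) (Xs k.+1 i) <= ipb (g (Xs k) i) Z).

From HB Require Import structures.
From mathcomp Require Import all_boot all_order all_algebra.
From mathcomp Require Import all_classical all_reals.
From mathcomp Require Import all_analysis ring lra.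
Import Order.TTheory GRing.Theory Num.Theory.
Import numFieldNormedType.Exports.
Local Open Scope ring_scope.
Local Open Scope classical_set_scope.
Set Implicit Arguments. Unset Strict Implicit.

(* Write c_i(X) = L0_i + L1_i |grad_i f(X)|_* .  Integrating the layer-wise
   smoothness bound along the segment [X, Y] (i.e. showing that
   s |-> f(X + s(Y - X)) - s <grad f(X), Y - X> - s^2 C / 2 is nonincreasing)
   gives the descent inequality
     f(Y) <= f(X) + <grad f(X), Y - X> + sum_i c_i(X) |Y_i - X_i|^2 / 2.
   A Gluon step moves block i by t_i = |grad_i f|_* / c_i in the direction
   minimising <grad_i f, .>, so f decreases by at least
   sum_i |grad_i f|_*^2 / (2 c_i).  Bounding every c_i by
   sum_j L0_j + L1max |grad f| and using the PL inequality, the gap decreases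
   by at least mu eps / (sum_j L0_j + sqrt 2 L1max sqrt (mu eps)) while it
   exceeds eps, which gives (1).  When L1 = 0, c_i <= L0max and the PL
   inequality give the contraction gap_(k+1) <= (1 - mu / L0max) gap_k, hence
   (2). *)

Section IsNorm.
Variables (R : realType) (a b : nat) (N : 'M[R]_(a, b) -> R).
Hypothesis HN : is_norm N.

Lemma isnorm_ge0 A : 0 <= N A. Proof. by case: HN. Qed.

Lemma isnorm_eq0 A : N A = 0 -> A = 0. Proof. by case: HN => _ + _ _; apply. Qed.

Lemma isnormZ c A : N (c *: A) = `|c| * N A. Proof. by case: HN. Qed.

Lemma isnormD A B : N (A + B) <= N A + N B. Proof. by case: HN. Qed.

Lemma isnorm0 : N 0 = 0.
Proof. by rewrite -(scale0r 0) isnormZ normr0 mul0r. Qed.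

Lemma isnormN A : N (- A) = N A.
Proof. by rewrite -scaleN1r isnormZ normrN normr1 mul1r. Qed.

Lemma isnorm_sum (I : Type) (s : seq I) (F : I -> 'M[R]_(a, b)) :
  N (\sum_(j <- s) F j) <= \sum_(j <- s) N (F j).
Proof.
elim: s => [|x s IH]; first by rewrite !big_nil isnorm0.
by rewrite !big_cons; apply: le_trans (isnormD _ _) _; rewrite lerD2l.
Qed.

Lemma isnorm_dist A B : `|N A - N B| <= N (A - B).
Proof.
have HA := isnormD (A - B) B; have HB := isnormD (B - A) A.
rewrite subrK in HA; rewrite subrK -opprB isnormN in HB.
by rewrite ler_norml; apply/andP; split; lra.
Qed.

Lemma mx_norm_ge_entry (A : 'M[R]_(a, b)) i j : `|A i j| <= `|A|.
Proof.
change (`|A i j| <= mx_norm A); rewrite mx_normrE.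
exact: (le_bigmax _ (fun ij : 'I_a * 'I_b => `|A ij.1 ij.2|) (i, j)).
Qed.

Lemma isnorm_le_mx_norm : exists2 B : R, 0 < B & forall A, N A <= B * `|A|.
Proof.
pose B := \sum_i \sum_j N (delta_mx i j).
have B0 : 0 <= B by do 2 (apply: sumr_ge0 => ? _); exact: isnorm_ge0.
exists (B + 1) => [|A]; first lra.
apply: (@le_trans _ _ (B * `|A|)); last by rewrite ler_wpM2r ?normr_ge0 // lerDl.
rewrite {1}(matrix_sum_delta A) mulr_suml.
apply: le_trans (isnorm_sum _ _) _; apply: ler_sum => i _.
rewrite mulr_suml; apply: le_trans (isnorm_sum _ _) _; apply: ler_sum => j _.
by rewrite isnormZ mulrC ler_wpM2l ?isnorm_ge0 ?mx_norm_ge_entry.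
Qed.

Lemma isnorm_continuous : continuous N.
Proof.
have [B B0 HB] := isnorm_le_mx_norm.
move=> A; apply/(@cvgrPdist_le _ _ _ (nbhs A) (nbhs_filter A)) => e e0; near=> Z.
apply: le_trans (isnorm_dist A Z) _; apply: le_trans (HB _) _.
rewrite -ler_pdivlMl //; near: Z.
apply/(@nbhs_normP R 'M[R]_(a, b)); exists (B^-1 * e) => [|Z /ltW //].
by rewrite /= mulr_gt0 ?invr_gt0.
Unshelve. all: by end_near.
Qed.

End IsNorm.

(* [N] is bounded below on the compact unit sphere, where it does not vanish. *)
Lemma isnorm_rV_ge_mx_norm (R : realType) (k : nat) (N : 'rV[R]_k -> R) : is_norm N ->
  exists2 c : R, 0 < c & forall v, c * `|v| <= N v.
Proof.
move=> HN; pose S := [set v : 'rV[R]_k | `|v| = 1].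
have S_compact : compact S.
  apply: bounded_closed_compact.
    by exists 1; split => // x x1 v; rewrite /S /= => ->; exact: ltW.
  rewrite (_ : S = Num.norm @^-1` [set 1]) //.
  apply: preimage_closed; last exact: closed_eq.
  by move=> x _; exact: norm_continuous.
have NS_closed : closed (N @` S).
  apply/(compact_closed (@Rhausdorff R))/continuous_compact => //.
  by apply: continuous_subspaceT; exact: isnorm_continuous HN.
have : nbhs (0 : R) (~` (N @` S)).
  apply: open_nbhs_nbhs; split; first exact: closed_openC.
  move=> [v Sv /(isnorm_eq0 HN) v0]; move: Sv; rewrite /S /= v0 normr0 => /eqP.
  by rewrite eq_sym oner_eq0.
move=> /nbhs_ballP [d d0 Hd]; exists d => // v.
have [->|v0] := eqVneq v 0; first by rewrite normr0 mulr0 (isnorm_ge0 HN).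
have nv0 : 0 < `|v| by rewrite normr_gt0.
have Su : S (`|v|^-1 *: v).
  by rewrite /S /= normrZ normrV ?unitfE ?gt_eqF // normr_id mulVf ?gt_eqF.
have : ~ ball (0 : R) d (N (`|v|^-1 *: v)) by move=> /Hd; apply; exists (`|v|^-1 *: v).
rewrite -ball_normE /ball_ /= sub0r normrN ger0_norm ?(isnorm_ge0 HN) // => /negP.
rewrite -leNgt (isnormZ HN) ger0_norm ?invr_ge0 ?normr_ge0 //.
by rewrite mulrC ler_pdivlMr.
Qed.

Section DualNorm.
Variables (R : realType) (a b : nat).
Implicit Types G X Y Z W : 'M[R]_(a, b).

Lemma ipbE Y Z : ipb Y Z = \sum_j \sum_i Y i j * Z i j.
Proof.
rewrite /ipb /mxtrace; apply: eq_bigr => j _; rewrite mxE.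
by apply: eq_bigr => i _; rewrite mxE.
Qed.

Lemma ipbDr Y Z W : ipb Y (Z + W) = ipb Y Z + ipb Y W.
Proof. by rewrite /ipb mulmxDr mxtraceD. Qed.

Lemma ipbZr Y Z c : ipb Y (c *: Z) = c * ipb Y Z.
Proof. by rewrite /ipb -scalemxAr mxtraceZ. Qed.

Lemma ipbNr Y Z : ipb Y (- Z) = - ipb Y Z.
Proof. by rewrite -scaleN1r ipbZr mulN1r. Qed.

Lemma ipbBl Y W Z : ipb (Y - W) Z = ipb Y Z - ipb W Z.
Proof. by rewrite /ipb linearB /= mulmxBl raddfB. Qed.

Lemma ipb0r Y : ipb Y 0 = 0.
Proof. by rewrite /ipb mulmx0 mxtrace0. Qed.

Lemma ipb0l Z : ipb 0 Z = 0.
Proof. by rewrite /ipb trmx0 mul0mx mxtrace0. Qed.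

Variable N : 'M[R]_(a, b) -> R.
Hypothesis HN : is_norm N.

Lemma isnorm_ball_entry_bounded :
  exists C : R, forall Z, N Z <= 1 -> forall i j, `|Z i j| <= C.
Proof.
have HNv : is_norm (N \o @vec_mx R a b).
  split => [A|A /(isnorm_eq0 HN) A0|c A|A B] /=.
  - exact: (isnorm_ge0 HN).
  - by rewrite -(vec_mxK A) A0 linear0.
  - by rewrite linearZ (isnormZ HN).
  - by rewrite linearD (isnormD HN).
have [c c0 Hc] := isnorm_rV_ge_mx_norm HNv.
exists c^-1 => Z NZ i j; rewrite -mxvecE.
apply: le_trans (mx_norm_ge_entry _ _ _) _.
by rewrite -(ler_pM2l c0) mulfV ?gt_eqF //; apply: le_trans (Hc _) _; rewrite /= mxvecK.
Qed.

Lemma dualn_has_sup Y : has_sup [set ipb Y Z | Z in [set Z | N Z <= 1]].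
Proof.
have [C HC] := isnorm_ball_entry_bounded.
split; first by exists 0, 0; rewrite /= ?(isnorm0 HN) ?ipb0r.
exists (\sum_j \sum_i `|Y i j| * C) => _ [Z /HC HZ <-].
rewrite ipbE; apply: ler_sum => j _; apply: ler_sum => i _.
by apply: le_trans (ler_norm _) _; rewrite normrM ler_wpM2l.
Qed.

Lemma ipb_le_dualn Y Z : N Z <= 1 -> ipb Y Z <= dualn N Y.
Proof. by move=> HZ; apply: (sup_upper_bound (dualn_has_sup Y)); exists Z. Qed.

Lemma dualn_ge0 Y : 0 <= dualn N Y.
Proof. by rewrite -(ipb0r Y) ipb_le_dualn ?(isnorm0 HN). Qed.

Lemma ge_dualn Y x : (forall Z, N Z <= 1 -> ipb Y Z <= x) -> dualn N Y <= x.
Proof.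
move=> H; apply: ge_sup => [|_ [Z HZ <-]]; last exact: H.
by exists 0, 0; rewrite /= ?(isnorm0 HN) ?ipb0r.
Qed.

Lemma dualn0 : dualn N 0 = 0.
Proof. by apply/le_anti; rewrite dualn_ge0 andbT ge_dualn // => Z _; rewrite ipb0l. Qed.

Lemma ipb_le_dualnM Y Z : ipb Y Z <= dualn N Y * N Z.
Proof.
have [NZ0|NZ_neq0] := eqVneq (N Z) 0.
  by rewrite NZ0 (isnorm_eq0 HN NZ0) ipb0r mulr0.
have NZ_gt0 : 0 < N Z by rewrite lt_neqAle eq_sym NZ_neq0 (isnorm_ge0 HN).
have := @ipb_le_dualn Y ((N Z)^-1 *: Z).
rewrite ipbZr (isnormZ HN) ger0_norm ?invr_ge0 ?(isnorm_ge0 HN) // mulVf //.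
move=> /(_ (lexx _)).
by rewrite mulrC -ler_pdivlMr ?invr_gt0 // invrK.
Qed.

Lemma ipb_argmin_ball_le G X W t : 0 <= t ->
  (forall Z, N (Z - X) <= t -> ipb G W <= ipb G Z) ->
  ipb G (W - X) <= - (t * dualn N G).
Proof.
move=> t0 Hmin.
have WX : ipb G W <= ipb G X by apply: Hmin; rewrite subrr (isnorm0 HN).
have [->|t_neq0] := eqVneq t 0.
  by rewrite mul0r oppr0 ipbDr ipbNr subr_le0.
have t_gt0 : 0 < t by rewrite lt_neqAle eq_sym t_neq0.
suff : dualn N G <= - ipb G (W - X) / t by rewrite ler_pdivlMr // mulrC; lra.
apply: ge_dualn => Z HZ; rewrite ler_pdivlMr // mulrC.
have : ipb G W <= ipb G (X - t *: Z).
  apply: Hmin; rewrite addrAC subrr add0r (isnormN HN) (isnormZ HN) ger0_norm //.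
  by rewrite -[leRHS]mulr1 ler_wpM2l.
by rewrite !ipbDr !ipbNr ipbZr; lra.
Qed.

Lemma ipb_lmo_step_le G X W c : 0 <= c -> (G != 0 -> 0 < c) ->
  let t := if G == 0 then 0 else dualn N G / c in
  N (W - X) <= t -> (forall Z, N (Z - X) <= t -> ipb G W <= ipb G Z) ->
  ipb G (W - X) + c * N (W - X) ^+ 2 / 2 <= - (dualn N G ^+ 2 / (2 * c)).
Proof.
move=> c0 c_gt0 t WX Hmin.
have NWX0 := isnorm_ge0 HN (W - X).
have [G0|G_neq0] := eqVneq G 0.
  have t0 : t = 0 by rewrite /t G0 eqxx.
  have NWX : N (W - X) = 0 by apply/le_anti; rewrite NWX0 -t0 WX.
  by rewrite G0 ipb0l dualn0 NWX expr0n /= !(mul0r, mulr0) oppr0 addr0.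
have c_pos := c_gt0 G_neq0.
have tE : t = dualn N G / c by rewrite /t (negbTE G_neq0).
have t0 : 0 <= t by rewrite tE divr_ge0 ?dualn_ge0 ?ltW.
have := ipb_argmin_ball_le t0 Hmin.
have : N (W - X) ^+ 2 <= t ^+ 2 by rewrite !expr2; nra.
move/(ler_wpM2l (ltW c_pos)).
have -> : dualn N G ^+ 2 / (2 * c) = c * t ^+ 2 / 2 by rewrite tE; field; rewrite gt_eqF.
have -> : t * dualn N G = c * t ^+ 2 by rewrite tE; field; rewrite gt_eqF.
lra.
Qed.

End DualNorm.

Lemma is_derive1_approx (R : realType) (phi : R -> R) (x q : R) :
  (forall e : R, 0 < e -> exists2 d : R, 0 < d &
     forall h, `|h| < d -> `|phi (x + h) - phi x - h * q| <= e * `|h|) ->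
  is_derive x 1 phi q.
Proof.
move=> Happrox.
have Hcvg : (fun h => h^-1 *: ((phi \o shift x) (h *: 1) - phi x)) @ 0^' --> q.
  apply/cvgrPdist_le => e e0; have [d d0 Hd] := Happrox e e0.
  near=> h.
  have hN0 : h != 0 by near: h; exact: nbhs_dnbhs_neq.
  have hd : `|h| < d by near: h; exact: dnbhs0_lt.
  rewrite /= [h *: 1]mulr1 [h + x]addrC -[q](mulKf hN0) -mulrBr normrM normfV.
  rewrite ler_pdivrMl ?normr_gt0 // distrC (mulrC `|h|); exact: Hd.
split; [by apply/cvg_ex; exists q | exact: cvg_lim].
Unshelve. all: by end_near.
Qed.

Lemma is_derive_nonpos_le (R : realType) (phi q : R -> R) (a b : R) : a <= b ->
  (forall s : R, is_derive s 1 phi (q s)) -> (forall s, a < s < b -> q s <= 0) ->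
  phi b <= phi a.
Proof.
move=> ab dphi q_le0.
apply: (ler0_derive1_le_cc (a := a) (b := b)); rewrite ?in_itv /= ?lexx ?ab //.
- by move=> s; rewrite in_itv /= derive1E derive_val; exact: q_le0.
- by apply: derivable_within_continuous => s _; exact: ex_derive.
Qed.

Lemma ler_sum_term (R : numDomainType) (p : nat) (F : 'I_p -> R) i :
  (forall j, 0 <= F j) -> F i <= \sum_j F j.
Proof. by move=> F0; rewrite (bigD1 i) //= lerDl sumr_ge0. Qed.

Lemma ler_absz (R : realDomainType) (x : R) (z : int) :
  x <= z%:~R -> x <= (`|z|%N)%:R.
Proof.
by move=> xz; rewrite natr_absz; apply: le_trans xz _; rewrite ler_int ler_norm.
Qed.

Lemma ltr_sqr_div_affine (R : realFieldType) (A L w G : R) :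
  0 <= A -> 0 <= L -> 0 < w -> w < G -> 0 < A + L * w ->
  w ^+ 2 / (A + L * w) < G ^+ 2 / (A + L * G).
Proof.
move=> A0 L0 w0 wG Bw.
have BG : 0 < A + L * G by apply: lt_le_trans Bw _; rewrite lerD2l ler_wpM2l // ltW.
rewrite ltr_pdivrMr // mulrAC ltr_pdivlMr //.
have h1 : 0 < (G - w) * G * (A + L * w) by rewrite !mulr_gt0 // ?subr_gt0 // (lt_trans w0).
have h2 : 0 <= (G - w) * A * w by rewrite !mulr_ge0 // ?subr_ge0 // ltW.
nra.
Qed.

Lemma geometric_decay_le (R : realType) (u : nat -> R) (kappa eps : R) (K : nat) :
  0 < kappa -> 0 < eps -> (forall k, 0 <= u k) ->
  (forall k, u k.+1 <= (1 - kappa^-1) * u k) ->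
  kappa * ln (u 0%N / eps) <= K%:R -> u K <= eps.
Proof.
move=> kappa0 eps0 u0 u_step HK.
have u_exp k : u k <= expR (- (k%:R / kappa)) * u 0%N.
  elim: k => [|k IH]; first by rewrite mul0r oppr0 expR0 mul1r.
  apply: le_trans (u_step k) _; apply: le_trans (ler_wpM2r (u0 k) (expR_ge1Dx _)) _.
  apply: le_trans (ler_wpM2l (expR_ge0 _) IH) _.
  by rewrite mulrA -expRD -[k.+1]addn1 natrD mulrDl mul1r opprD addrC.
have [u0_le|u0_gt] := leP (u 0%N) eps.
  apply: le_trans (u_exp K) _; apply: le_trans u0_le.
  by rewrite ler_piMl // expR_le1 oppr_le0 divr_ge0 // ltW.
have r1 : 1 < u 0%N / eps by rewrite ltr_pdivlMr // mul1r.
have : expR (- (K%:R / kappa)) <= expR (- ln (u 0%N / eps)).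
  by rewrite ler_expR lerN2 ler_pdivlMr // mulrC.
rewrite expRN lnK ?posrE ?(lt_trans ltr01) // invf_div => H.
apply: le_trans (u_exp K) _; apply: le_trans (ler_wpM2r (u0 0%N) H) _.
by rewrite divfK // gt_eqF // (lt_trans eps0).
Qed.

Lemma sublinear_decay_hit (R : realType) (u : nat -> R) (dl eps : R) (K : nat) :
  (0 < K)%N -> (forall k, 0 <= u k) ->
  (forall k, eps < u k -> dl < u k - u k.+1) ->
  u 0%N <= K%:R * dl -> exists2 k, (k < K)%N & u k <= eps.
Proof.
move=> K0 u0 u_step HK; apply: contrapT => none.
have u_gt k : (k < K)%N -> eps < u k.
  by move=> kK; rewrite ltNge; apply/negP => uk; apply: none; exists k.
have u_lin k : (k <= K)%N -> u k + k%:R * dl <= u 0%N.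
  elim: k => [|k IH] kK; first by rewrite mul0r addr0.
  have := u_step k (u_gt k kK); have := IH (ltnW kK).
  rewrite -addn1 natrD mulrDl mul1r; lra.
case: K K0 HK none u_gt u_lin => // K _ HK _ u_gt u_lin.
have := u_step K (u_gt K (ltnSn K)); have := u_lin K (leqnSn K); have := u0 K.+1.
rewrite -addn1 natrD mulrDl mul1r in HK; lra.
Qed.

Section Gluon.
Variables (R : realType) (p : nat) (m n : 'I_p -> nat).
Variable N : forall i : 'I_p, 'M[R]_(m i, n i) -> R.
Arguments N : clear implicits.
Hypothesis HN : forall i : 'I_p, is_norm (N i).
Variables (f : prodS R m n -> R) (g : prodS R m n -> prodS R m n).
Hypothesis Hf : C1_with_gradient f g.
Implicit Types X Y D G : prodS R m n.

Definition lineS X D (s : R) : prodS R m n := fun i => X i + s *: D i.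

Lemma lineS0 X D : lineS X D 0 = X.
Proof. by apply: functional_extensionality_dep => i; rewrite /lineS scale0r addr0. Qed.

Lemma lineS1 X Y : lineS X (subS Y X) 1 = Y.
Proof.
by apply: functional_extensionality_dep => i; rewrite /lineS scale1r addrC subrK.
Qed.

Lemma subS_lineS X D s h :
  subS (lineS X D (s + h)) (lineS X D s) = fun i => h *: D i.
Proof.
apply: functional_extensionality_dep => i.
by rewrite /subS /lineS scalerDl opprD addrACA subrr add0r addrAC subrr add0r.
Qed.

Lemma refnS_ge0 X : 0 <= refnS X.
Proof. by do 3 (apply: sumr_ge0 => ? _). Qed.

Lemma refnSZ h D : refnS (fun i => h *: D i) = `|h| * refnS D.
Proof.
rewrite /refnS mulr_sumr; apply: eq_bigr => i _; rewrite mulr_sumr.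
apply: eq_bigr => a _; rewrite mulr_sumr; apply: eq_bigr => b _.
by rewrite mxE normrM.
Qed.

Lemma ipSZ G h D : ipS G (fun i => h *: D i) = h * ipS G D.
Proof. by rewrite /ipS mulr_sumr; apply: eq_bigr => i _; rewrite ipbZr. Qed.

Lemma is_derive_lineS X D (s : R) :
  is_derive s 1 (f \o lineS X D) (ipS (g (lineS X D s)) D).
Proof.
apply: is_derive1_approx => e e0.
set r := refnS D; have r1 : 0 < r + 1 by rewrite ltr_wpDl ?refnS_ge0.
have [d d0 Hd] := Hf.1 (lineS X D s) (e / (r + 1)) (divr_gt0 e0 r1).
exists (d / (r + 1)) => [|h]; first by rewrite divr_gt0.
rewrite ltr_pdivlMr // => hd.
have hr : `|h| * r <= `|h| * (r + 1) by rewrite ler_wpM2l // lerDl.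
have := Hd (lineS X D (s + h)); rewrite subS_lineS refnSZ ipSZ => /(_ (le_lt_trans hr hd)).
move/le_trans; apply; apply: le_trans (ler_wpM2l _ hr) _; first by rewrite divr_ge0 // ltW.
by rewrite mulrCA divfK ?gt_eqF // mulrC.
Qed.

Variables (L0 L1 : 'I_p -> R).
Hypotheses (HL0 : forall i, 0 <= L0 i) (HL1 : forall i, 0 <= L1 i).
Hypothesis Hsmooth : forall (i : 'I_p) X Y,
  dualn (N i) (g X i - g Y i)
    <= (L0 i + L1 i * dualn (N i) (g X i)) * N i (X i - Y i).

Lemma ipb_grad_lineS_le X D s i : 0 <= s ->
  ipb (g (lineS X D s) i - g X i) (D i)
    <= (L0 i + L1 i * dualn (N i) (g X i)) * N i (D i) ^+ 2 * s.
Proof.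
move=> s0.
have -> : ipb (g (lineS X D s) i - g X i) (D i) = ipb (g X i - g (lineS X D s) i) (- D i).
  by rewrite ipbNr !ipbBl opprB.
apply: le_trans (ipb_le_dualnM (HN i) _ _) _.
apply: le_trans (ler_wpM2r (isnorm_ge0 (HN i) _) (Hsmooth i X (lineS X D s))) _.
have -> : X i - lineS X D s i = - (s *: D i) by rewrite /lineS opprD addNKr.
by rewrite !(isnormN (HN i)) (isnormZ (HN i)) ger0_norm // expr2; lra.
Qed.

Lemma descent X Y :
  f Y <= f X + ipS (g X) (subS Y X) +
    (\sum_i (L0 i + L1 i * dualn (N i) (g X i)) * N i (Y i - X i) ^+ 2) / 2.
Proof.
set D := subS Y X; set a := ipS (g X) D; set C := \sum_i _.
pose phi := (f \o lineS X D) - a \*: id - (C / 2) \*: id ^+ 2.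
have dphi (s : R) : is_derive s 1 phi (ipS (g (lineS X D s)) D - a - C * s).
  have dF := is_derive_lineS X D s; apply: is_derive_eq.
  rewrite /= expr1; change (ipS (g (lineS X D s)) D - a * 1 - C / 2 * (2 * s * 1)
                           = ipS (g (lineS X D s)) D - a - C * s).
  by rewrite !mulr1 mulrA divfK ?pnatr_eq0.
have q_le0 s : 0 < s < 1 -> ipS (g (lineS X D s)) D - a - C * s <= 0.
  case/andP => /ltW s0 _; rewrite /a /ipS /C subr_le0 -sumrB mulr_suml.
  by apply: ler_sum => i _; rewrite -ipbBl; exact: ipb_grad_lineS_le.
have := is_derive_nonpos_le ler01 dphi q_le0.
change (f (lineS X D 1) - a * 1 - C / 2 * (1 * 1)
        <= f (lineS X D 0) - a * 0 - C / 2 * (0 * 0) -> f Y <= f X + a + C / 2).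
rewrite lineS0 lineS1 !mulr1 !mulr0; lra.
Qed.

Variable Xs : nat -> prodS R m n.
Hypothesis Hwd : forall (k : nat) (i : 'I_p), g (Xs k) i != 0 ->
  L0 i + L1 i * dualn (N i) (g (Xs k) i) != 0.
Hypothesis Hrun : gluon_run N g (fun k i => gluon_radius N L0 L1 (g (Xs k)) i) Xs.

Local Notation gm k i := (dualn (N i) (g (Xs k) i)).
Local Notation curv k i := (L0 i + L1 i * gm k i).

Lemma curv_ge0 k i : 0 <= curv k i.
Proof. by rewrite addr_ge0 ?mulr_ge0 ?(dualn_ge0 (HN i)). Qed.

Lemma curv_gt0 k i : g (Xs k) i != 0 -> 0 < curv k i.
Proof. by move=> /Hwd curv_neq0; rewrite lt_neqAle eq_sym curv_neq0 curv_ge0. Qed.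

Lemma gluon_step k :
  f (Xs k.+1) <= f (Xs k) - \sum_i gm k i ^+ 2 / (2 * curv k i).
Proof.
apply: le_trans (descent (Xs k) (Xs k.+1)) _.
rewrite -addrA lerD2l /ipS mulr_suml -big_split -sumrN /=; apply: ler_sum => i _.
have [Hr1 Hr2] := Hrun k i.
exact: (ipb_lmo_step_le (HN i) (curv_ge0 k i) (@curv_gt0 k i) Hr1 Hr2).
Qed.

Lemma curv_gt0_of_gm k i : gm k i != 0 -> 0 < curv k i.
Proof.
by move=> gm_neq0; apply: curv_gt0; apply: contra_neq gm_neq0 => ->; exact: dualn0.
Qed.

Variables (mu eps : R).
Hypotheses (Hmu : 0 < mu) (Heps : 0 < eps).
Hypothesis Hbdd : exists lb : R, forall X, lb <= f X.
Hypothesis HPL : forall X : prodS R m n,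
  \sum_i (dualn (N i) (g X i)) ^+ 2 >= 2 * mu * (f X - fstar f).

Local Notation gap k := (f (Xs k) - fstar f).

Lemma fstar_le X : fstar f <= f X.
Proof.
apply: ge_inf; last by exists X.
by case: Hbdd => lb Hlb; exists lb => _ [Y _ <-].
Qed.

Lemma gap_ge0 k : 0 <= gap k.
Proof. by rewrite subr_ge0 fstar_le. Qed.

Lemma gap_step_le k M : (forall i, curv k i <= M) ->
  gap k.+1 <= gap k - (\sum_i gm k i ^+ 2) / (2 * M).
Proof.
move=> curvM; have := gluon_step k; rewrite mulr_suml.
suff : \sum_i gm k i ^+ 2 / (2 * M) <= \sum_i gm k i ^+ 2 / (2 * curv k i) by lra.
apply: ler_sum => i _.
have [->|/curv_gt0_of_gm curv_pos] := eqVneq (gm k i) 0; first by rewrite expr0n /= !mul0r.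
have M_pos : 0 < M := lt_le_trans curv_pos (curvM i).
by rewrite ler_wpM2l ?sqr_ge0 // lef_pV2 ?posrE ?mulr_gt0 // ler_pM2l.
Qed.

Lemma gap_le0_of_curv_eq0 k : (forall i, curv k i = 0) -> gap k <= 0.
Proof.
move=> curv0.
have gm0 i : gm k i = 0.
  by apply/eqP/negP => /negP/curv_gt0_of_gm; rewrite curv0 ltxx.
have := HPL (Xs k); rewrite big1 => [PL|i _]; last by rewrite gm0 expr0n.
by have := Hmu; nra.
Qed.

Local Notation L0max := (\big[Num.max/0]_(i < p) L0 i).

(* If L0max = 0 the factor is 1, as 0^-1 = 0. *)
Lemma gap_linear_step k : (forall i, L1 i = 0) ->
  gap k.+1 <= (1 - (L0max / mu)^-1) * gap k.
Proof.
move=> L1_0.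
have curvM i : curv k i <= L0max by rewrite L1_0 mul0r addr0; exact: le_bigmax.
have L0max_ge0 : 0 <= L0max by exact: bigmax_ge_id.
have := gap_step_le curvM; have := HPL (Xs k).
move/(@ler_wpM2r _ (2 * L0max)^-1); rewrite invr_ge0 mulr_ge0 // => /(_ isT).
have -> : 2 * mu * gap k / (2 * L0max) = (L0max / mu)^-1 * gap k.
  by rewrite invf_div invfM; move: (L0max^-1) => iL; field.
lra.
Qed.

Lemma gap_linear_rate K : (forall i, L1 i = 0) ->
  L0max / mu * ln (gap 0%N / eps) <= K%:R -> gap K <= eps.
Proof.
move=> L1_0 HK.
have [L0max_gt0|L0max_le0] := ltP 0 L0max.
  apply: (geometric_decay_le (u := fun k => gap k)) HK => //.
  - exact: divr_gt0.
  - exact: gap_ge0.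
  - by move=> k; exact: gap_linear_step.
have L0_0 i : L0 i = 0.
  by apply/le_anti; rewrite HL0 andbT (le_trans _ L0max_le0) //; exact: le_bigmax.
apply: le_trans (ltW Heps); apply: gap_le0_of_curv_eq0 => i.
by rewrite L0_0 L1_0 mul0r addr0.
Qed.

Local Notation sumL0 := (\sum_(i < p) L0 i).
Local Notation L1max := (\big[Num.max/0]_(i < p) L1 i).
Local Notation w := (Num.sqrt 2 * Num.sqrt (mu * eps)).

Lemma sublinear_denom_gt0 k : eps < gap k -> 0 < sumL0 + L1max * w.
Proof.
move=> gap_gt.
have w_gt0 : 0 < w by rewrite mulr_gt0 // sqrtr_gt0 // mulr_gt0.
have sum_ge0 : 0 <= sumL0 by exact: sumr_ge0.
have L1max_ge0 : 0 <= L1max by exact: bigmax_ge_id.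
rewrite ltNge; apply/negP => B_le0.
have sum_eq0 : sumL0 = 0 by have := mulr_ge0 L1max_ge0 (ltW w_gt0); lra.
have L1max_eq0 : L1max = 0.
  by apply/le_anti; rewrite L1max_ge0 andbT -(pmulr_rle0 _ w_gt0) mulrC; lra.
suff gap_le0 : gap k <= 0 by have := lt_le_trans gap_gt gap_le0; rewrite ltNge (ltW Heps).
apply: gap_le0_of_curv_eq0 => i.
have L0_0 : L0 i = 0 by apply/le_anti; rewrite HL0 andbT -sum_eq0 ler_sum_term.
have L1_0 : L1 i = 0.
  by apply/le_anti; rewrite HL1 andbT -L1max_eq0; exact: le_bigmax.
by rewrite L0_0 L1_0 mul0r addr0.
Qed.

Lemma gap_sublinear_step k :
  eps < gap k -> mu * eps / (sumL0 + L1max * w) < gap k - gap k.+1.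
Proof.
move=> gap_gt.
set G := Num.sqrt (\sum_i gm k i ^+ 2).
have sum_ge0 : 0 <= \sum_i gm k i ^+ 2 by apply: sumr_ge0 => i _; exact: sqr_ge0.
have G2 : G ^+ 2 = \sum_i gm k i ^+ 2 by rewrite sqr_sqrtr.
have me_gt0 : 0 < mu * eps by rewrite mulr_gt0.
have w2 : w ^+ 2 = 2 * (mu * eps) by rewrite exprMn !sqr_sqrtr // ltW.
have w_gt0 : 0 < w by rewrite mulr_gt0 // sqrtr_gt0.
have wG : w < G.
  have PL := HPL (Xs k).
  have PL' : 2 * (mu * eps) < \sum_i gm k i ^+ 2.
    by apply: lt_le_trans PL; rewrite mulrA ltr_pM2l // mulr_gt0.
  by rewrite -sqrtrM // ltr_sqrt // (lt_trans _ PL') // mulr_gt0.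
have gmG i : gm k i <= G.
  rewrite -(ger0_norm (dualn_ge0 (HN i) (g (Xs k) i))) -sqrtr_sqr ler_sqrt //.
  by apply: (ler_sum_term (F := fun j => gm k j ^+ 2)) => j; exact: sqr_ge0.
have curvM i : curv k i <= sumL0 + L1max * G.
  apply: lerD; first by apply: ler_sum_term.
  by apply: ler_pM; [|exact: dualn_ge0|exact: le_bigmax|exact: gmG].
have := gap_step_le curvM; rewrite -G2.
(* G ^+ 2 / (sumL0 + L1max * G) is increasing in G. *)
have := ltr_sqr_div_affine (sumr_ge0 _ (fun i _ => HL0 i)) (bigmax_ge_id _ _ _ _) w_gt0 wG
  (sublinear_denom_gt0 gap_gt).
rewrite w2; set B := sumL0 + _ * w; set M := sumL0 + _ * G.
have -> : G ^+ 2 / (2 * M) = G ^+ 2 / M / 2 by rewrite invfM mulrA mulrAC.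
have -> : mu * eps / B = 2 * (mu * eps) / B / 2.
  by rewrite [RHS]mulrAC [2 * _]mulrC mulfK ?pnatr_eq0.
lra.
Qed.

Lemma gap_sublinear_rate K : (0 < K)%N ->
  gap 0%N * sumL0 / (mu * eps) + Num.sqrt 2 * L1max * gap 0%N / Num.sqrt (mu * eps)
    <= K%:R ->
  exists2 k, (k < K)%N & gap k <= eps.
Proof.
move=> K_gt0 HK.
have [gap0_le|gap0_gt] := leP (gap 0%N) eps; first by exists 0%N.
have B_gt0 := sublinear_denom_gt0 gap0_gt.
apply: (sublinear_decay_hit (u := fun k => gap k)) K_gt0 gap_ge0 gap_sublinear_step _.
have me_gt0 : 0 < mu * eps by rewrite mulr_gt0.
apply: le_trans (ler_wpM2r _ HK); last by rewrite divr_ge0 // ltW.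
rewrite [X in _ <= X](_ : _ = gap 0%N) //.
have s_gt0 : 0 < Num.sqrt (mu * eps) by rewrite sqrtr_gt0.
have := sqr_sqrtr (ltW me_gt0); move: B_gt0 s_gt0.
move: (Num.sqrt (mu * eps)) => s B_gt0 s_gt0 <-.
by field; rewrite !gt_eqF.
Qed.

End Gluon.

Theorem theorem4 (R : realType) (p : nat) (m n : 'I_p -> nat)
  (N : forall i : 'I_p, 'M[R]_(m i, n i) -> R)
  (HN : forall i : 'I_p, is_norm (N i))
  (f : prodS R m n -> R) (g : prodS R m n -> prodS R m n)
  (Hf : C1_with_gradient f g)
  (Hbdd : exists lb : R, forall X, lb <= f X)
  (L0 L1 : 'I_p -> R)
  (HL0 : forall i, 0 <= L0 i) (HL1 : forall i, 0 <= L1 i)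
  (Hsmooth : forall (i : 'I_p) (X Y : prodS R m n),
     dualn (N i) (g X i - g Y i)
       <= (L0 i + L1 i * dualn (N i) (g X i)) * N i (X i - Y i))
  (mu : R) (Hmu : 0 < mu)
  (HPL : forall X : prodS R m n,
     \sum_(i < p) (dualn (N i) (g X i)) ^+ 2 >= 2 * mu * (f X - fstar f))
  (eps : R) (Heps : 0 < eps)
  (Xs : nat -> prodS R m n)
  (Hwd : forall (k : nat) (i : 'I_p), g (Xs k) i != 0 ->
     L0 i + L1 i * dualn (N i) (g (Xs k) i) != 0)
  (Hrun : gluon_run N g (fun k i => gluon_radius N L0 L1 (g (Xs k)) i) Xs) :
  let Delta0 := f (Xs 0%N) - fstar f in
  let L0max := \big[Num.max/0]_(i < p) L0 i in
  let L1max := \big[Num.max/0]_(i < p) L1 i in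
  (let K := `| Num.ceil (Delta0 * (\sum_(i < p) L0 i) / (mu * eps)
                + Num.sqrt 2 * L1max * Delta0 / Num.sqrt (mu * eps)) |%N in
   (1 <= K)%N ->
   \big[Num.min/f (Xs 0%N)]_(k < K) f (Xs k) - fstar f <= eps)
  /\
  ((forall i, L1 i = 0) ->
   let K := `| Num.max (0%R : int) (Num.ceil (L0max / mu * ln (Delta0 / eps))) |%N in
   f (Xs K) - fstar f <= eps).
Proof.
move=> Delta0 L0max L1max; split.
- move=> K K_gt0.
  have [k kK gap_k] := gap_sublinear_rate HN Hf HL0 HL1 Hsmooth Hwd Hrun Hmu Heps Hbdd HPL
    K_gt0 (ler_absz (ceil_ge _)).
  by apply: le_trans gap_k; rewrite lerD2r; exact: (bigmin_le _ (Ordinal kK)).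
- move=> L1_0.
  apply: (gap_linear_rate HN Hf HL0 HL1 Hsmooth Hwd Hrun Hmu Heps Hbdd HPL L1_0).
  by apply/ler_absz/(le_trans (ceil_ge _)); rewrite ler_int le_max lexx orbT.
Qed.
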